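(* Let $p_A,p_D,p_I\in(0,1)$, $q_A>0$, $q_D>0$, $q_I\ge0$, and set $r_A=p_A/q_A$, $r_D=p_D/q_D$, and (whenever $q_I<\frac12$) $\varepsilon=\Bigl(\frac{1}{r_D}\bigl(\frac{1}{\sqrt{1/2+q_I}}-1\bigr)\Bigr)^{-1/2}$. Let $J_A,J_D,J_I$ be the functions defined in the context, and consider the two three-player games on strategy sets $\alpha\in(0,1]$, $\beta\in(0,1]$, $\gamma\in[0,1]$: Game C (unknown malicious insider): the attacker minimizes $J_A(\alpha,\beta,\gamma)$ over $\alpha$, the defender minimizes $J_D(\alpha,\beta,0)$ over $\beta$, the insider maximizes $J_I(\alpha,\beta,\gamma)$ over $\gamma$; Game D (unknown inadvertent insider): the attacker minimizes $J_A(\alpha,\beta,0)$ over $\alpha$, the defender minimizes $J_D(\alpha,\beta,0)$ over $\beta$, the insider maximizes $J_I(\alpha,\beta,\gamma)$ over $\gamma$. A triple $(\alpha^*,\beta^*,\gamma^* )$ is a Nash equilibrium of a game if $\alpha^*$ minimizes the attacker's objective with $(\beta^*,\gamma^* )$ fixed, $\beta^*$ minimizes the defender's objective with $(\alpha^*,\gamma^* )$ fixed, and $\gamma^*$ maximizes the insider's objective with $(\alpha^*,\beta^* )$ fixed. Then the following hold. For Game C: (C1) if $\frac{r_A}{p_A}=r_D\le1$ and $q_I\le\bigl(\frac{1}{r_A/p_A+1}\bigr)^2-\frac12$, then for every $\beta^*\in[\varepsilon,1]$ the triple $\bigl(\frac{r_D}{\beta^*},\beta^*,1\bigr)$ is a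 Nash equilibrium; (C2) if $\frac{r_A}{p_A}\le1$, $\frac{r_A}{p_A}<r_D$ and $q_I\le\bigl(\frac{1}{r_A/p_A+1}\bigr)^2-\frac12$, then $\bigl(\frac{r_A}{p_A},1,1\bigr)$ is a Nash equilibrium. For Game D: (D1) if $r_A=r_D\le1$ and $q_I\le\bigl(\frac{1}{r_A+1}\bigr)^2-\frac12$, then for every $\beta^*\in[\varepsilon,1]$ the triple $\bigl(\frac{r_D}{\beta^*},\beta^*,1\bigr)$ is a Nash equilibrium; (D2) if $r_A\le1$, $r_A<r_D$ and $q_I\le\bigl(\frac{1}{r_A+1}\bigr)^2-\frac12$, then $(r_A,1,1)$ is a Nash equilibrium. For each of Game C and Game D: (i) if $r_A=r_D\le1$ and $q_I>\bigl(\frac1{r_A+1}\bigr)^2-\frac12$, then $\bigl(\frac{r_D}{\beta^*},\beta^*,0\bigr)$ is a Nash equilibrium for every $\beta^*\in[r_D,1]$; (ii) if $r_A=r_D\le1$ and $q_I\le\bigl(\frac1{r_A+1}\bigr)^2-\frac12$, then $\bigl(\frac{r_D}{\beta^*},\beta^*,0\bigr)$ is a Nash equilibrium for every $\beta^*\in[r_D,\varepsilon]$; (iii) if $r_A\le1$, $r_A<r_D$ and $q_I\ge\bigl(\frac1{r_A+1}\bigr)^2-\frac12$, then $(r_A,1,0)$ is a Nash equilibrium; (iv) if $r_D\le1$ and $r_D<r_A$, then $(1,r_D,0)$ is a Nash equilibrium; (v) if $r_A>1$ and $r_D>1$, then $(1,1,0)$ is a Nash equilibrium.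
   Context: For $\alpha,\beta\in(0,1]$ let $x(t)=\frac{\alpha}{\alpha+\beta}\bigl(1-e^{-(\alpha+\beta)t}\bigr)$, the solution of $\dot x=\alpha(1-x)-\beta x$, $x(0)=0$ (fraction of compromised resources). For $\gamma\in[0,1]$ define $J_A(\alpha,\beta,\gamma)=\lim_{T\to\infty}\frac1T\int_0^T\bigl[p_A(1-\gamma)^2+q_A\alpha^2+\gamma^2\bigr](1-x(t))^2\,dt$, $J_D(\alpha,\beta,\gamma)=\lim_{T\to\infty}\frac1T\int_0^T\bigl[p_D(1-\gamma)^2+q_D\beta^2+\gamma^2\bigr]x(t)^2\,dt$, $J_I(\alpha,\beta,\gamma)=\lim_{T\to\infty}\frac1T\int_0^T\bigl[(p_I+\gamma^2)(1-x(t))^2-(q_I\gamma+\tfrac12\gamma^2)\bigr]dt$. Here $\alpha$ is the attacker's strategy, $\beta$ the defender's, $\gamma$ the insider's. The paper phrases the conclusion as these equilibrium defense strategies $\beta^*$ being ''acceptable solutions'' to the defense problem with unknown insider threats. *)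

From Stdlib Require Import Reals.
From Coquelicot Require Import Coquelicot.
Open Scope R_scope.

(* fraction of compromised resources: solution of x' = a(1-x) - b x, x(0)=0 *)
Definition xsol (a b t : R) : R := a / (a + b) * (1 - exp (- (a + b) * t)).

Definition long_run_avg (f : R -> R) : R :=
  real (Lim (fun T => / T * RInt f 0 T) p_infty).

Definition J_A (pA qA a b g : R) : R :=
  long_run_avg (fun t => (pA * (1 - g) ^ 2 + qA * a ^ 2 + g ^ 2) * (1 - xsol a b t) ^ 2).

Definition J_D (pD qD a b g : R) : R :=
  long_run_avg (fun t => (pD * (1 - g) ^ 2 + qD * b ^ 2 + g ^ 2) * (xsol a b t) ^ 2).

Definition J_I (pI qI a b g : R) : R :=
  long_run_avg (fun t => (pI + g ^ 2) * (1 - xsol a b t) ^ 2 - (qI * g + / 2 * g ^ 2)).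

Definition NashEq (fA fD fI : R -> R -> R -> R) (a b g : R) : Prop :=
  (0 < a <= 1) /\ (0 < b <= 1) /\ (0 <= g <= 1) /\
  (forall a', 0 < a' <= 1 -> fA a b g <= fA a' b g) /\
  (forall b', 0 < b' <= 1 -> fD a b g <= fD a b' g) /\
  (forall g', 0 <= g' <= 1 -> fI a b g' <= fI a b g).

Definition GameC_NE (pA qA pD qD pI qI : R) : R -> R -> R -> Prop :=
  NashEq (fun a b g => J_A pA qA a b g)
         (fun a b g => J_D pD qD a b 0)
         (fun a b g => J_I pI qI a b g).

Definition GameD_NE (pA qA pD qD pI qI : R) : R -> R -> R -> Prop :=
  NashEq (fun a b g => J_A pA qA a b 0)
         (fun a b g => J_D pD qD a b 0)
         (fun a b g => J_I pI qI a b g).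

Definition eps_thr (rD qI : R) : R :=
  / sqrt (/ rD * (/ sqrt (/ 2 + qI) - 1)).

From Stdlib Require Import Reals Lra Psatz.
From Coquelicot Require Import Coquelicot.
Open Scope R_scope.

(* The compromised fraction x(t) tends exponentially fast to a / (a + b), so every long-run
   average equals its integrand at that limit.  The attacker's and the defender's costs then
   have the form (c + q x^2) (y / (x + y))^2 in their own strategy x, minimised over (0, 1] at
   x = min (1, c / (q y)).  With y = b / (a + b), the insider's payoff is
   g^2 (y^2 - 1/2) - qI g plus a constant, maximised over [0, 1] at g = 0 when
   y^2 - 1/2 <= qI and at g = 1 when qI <= y^2 - 1/2.  Every listed profile is a fixed point
   of these best responses; on the branch a = rD / b one has y = b^2 / (rD + b^2), which
   crosses the insider's threshold exactly at b = eps. *)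

Lemma is_lim_exp_neg_mul (k : R) :
  0 < k -> is_lim (fun t => exp (- k * t)) p_infty 0.
Proof.
  intro hk.
  apply (is_lim_comp exp (fun t => - k * t) p_infty 0 m_infty).
  - exact is_lim_exp_m.
  - replace m_infty with (Rbar_mult (- k) p_infty).
    + apply is_lim_scal_l, is_lim_id.
    + apply is_Rbar_mult_unique, is_Rbar_mult_sym, is_Rbar_mult_p_infty_neg.
      simpl; lra.
  - exists 0; discriminate.
Qed.

Lemma long_run_avg_antiderivative (f F : R -> R) (P L : R) :
  (forall t, is_derive F t (f t)) -> (forall t, continuous f t) ->
  is_lim (fun T => F T - P * T) p_infty L ->
  long_run_avg f = P.
Proof.
  intros hF hf hL.
  assert (hint : forall T, RInt f 0 T = F T - F 0).
  { intro T; apply is_RInt_unique; apply (is_RInt_derive F f); auto. }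
  assert (hinv : is_lim (fun T => / T) p_infty 0).
  { apply (is_lim_inv id p_infty p_infty); [apply is_lim_id | discriminate]. }
  assert (hrest : is_lim (fun T => / T * (F T - P * T - F 0)) p_infty 0).
  { replace (Finite 0) with (Rbar_mult 0 (L - F 0)) by (simpl; f_equal; ring).
    apply is_lim_mult; [exact hinv | | exact I].
    apply (is_lim_minus' _ _ _ L (F 0) hL), is_lim_const. }
  unfold long_run_avg.
  replace P with (P + 0) by ring.
  rewrite (is_lim_unique (fun T => / T * RInt f 0 T) p_infty (P + 0)); [reflexivity |].
  apply (is_lim_ext_loc (fun T => P + / T * (F T - P * T - F 0))).
  - exists 0; intros T hT; rewrite hint; field; lra.
  - apply is_lim_plus'; [apply is_lim_const | exact hrest].
Qed.

Lemma long_run_avg_exp_quadratic (f : R -> R) (P Q S k : R) : 0 < k ->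
  (forall t, f t = P + Q * exp (- k * t) + S * exp (- k * t) ^ 2) ->
  long_run_avg f = P.
Proof.
  intros hk hf.
  apply (long_run_avg_antiderivative f
           (fun t => P * t - Q / k * exp (- k * t) - S / (2 * k) * exp (- k * t) ^ 2)
           P 0).
  - intro t; rewrite hf; auto_derive; [easy | field; lra].
  - intro t; apply (continuous_ext (fun t => P + Q * exp (- k * t) + S * exp (- k * t) ^ 2)).
    + intro; symmetry; apply hf.
    + apply (ex_derive_continuous (fun t => P + Q * exp (- k * t) + S * exp (- k * t) ^ 2)).
      auto_derive; easy.
  - pose proof (is_lim_exp_neg_mul k hk) as he.
    pose proof (is_lim_mult _ _ _ 0 0 he he I) as he2.
    pose proof (is_lim_scal_l _ (Q / k) _ _ he) as hQ.
    pose proof (is_lim_scal_l _ (S / (2 * k)) _ _ he2) as hS.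
    simpl in he2, hQ, hS.
    replace (Finite 0) with (Finite (- (Q / k * 0) - S / (2 * k) * (0 * 0))) by (f_equal; ring).
    apply (is_lim_ext (fun T => - (Q / k * exp (- k * T))
                                - S / (2 * k) * (exp (- k * T) * exp (- k * T)))).
    + intro; ring.
    + apply is_lim_minus'; [apply (is_lim_opp _ _ (Q / k * 0)) | ]; assumption.
Qed.

Lemma long_run_avg_one_sub_xsol_sq (f : R -> R) (a b c d : R) : 0 < a -> 0 < b ->
  (forall t, f t = c * (1 - xsol a b t) ^ 2 + d) ->
  long_run_avg f = c * (b / (a + b)) ^ 2 + d.
Proof.
  intros ha hb hf.
  apply (long_run_avg_exp_quadratic f _ (2 * c * (b / (a + b)) * (a / (a + b)))
           (c * (a / (a + b)) ^ 2) (a + b)); [lra |].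
  intro t; rewrite hf; unfold xsol; field; lra.
Qed.

Lemma long_run_avg_xsol_sq (f : R -> R) (a b c : R) : 0 < a -> 0 < b ->
  (forall t, f t = c * xsol a b t ^ 2) ->
  long_run_avg f = c * (a / (a + b)) ^ 2.
Proof.
  intros ha hb hf.
  apply (long_run_avg_exp_quadratic f _ (- 2 * c * (a / (a + b)) ^ 2)
           (c * (a / (a + b)) ^ 2) (a + b)); [lra |].
  intro t; rewrite hf; unfold xsol; field; lra.
Qed.

Definition share_cost (c q x y : R) : R := (c + q * x ^ 2) * (y / (x + y)) ^ 2.

Definition insider_payoff (pI qI y g : R) : R := (pI + g ^ 2) * y ^ 2 - (qI * g + / 2 * g ^ 2).

Lemma J_A_eq (pA qA a b g : R) : 0 < a -> 0 < b ->
  J_A pA qA a b g = share_cost (pA * (1 - g) ^ 2 + g ^ 2) qA a b.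
Proof.
  intros ha hb; unfold J_A, share_cost.
  rewrite (long_run_avg_one_sub_xsol_sq _ a b (pA * (1 - g) ^ 2 + qA * a ^ 2 + g ^ 2) 0);
    [ring | easy | easy | intro; ring].
Qed.

Lemma J_D_eq (pD qD a b g : R) : 0 < a -> 0 < b ->
  J_D pD qD a b g = share_cost (pD * (1 - g) ^ 2 + g ^ 2) qD b a.
Proof.
  intros ha hb; unfold J_D, share_cost.
  rewrite (long_run_avg_xsol_sq _ a b (pD * (1 - g) ^ 2 + qD * b ^ 2 + g ^ 2));
    [rewrite (Rplus_comm a); ring | easy | easy | easy].
Qed.

Lemma J_I_eq (pI qI a b g : R) : 0 < a -> 0 < b ->
  J_I pI qI a b g = insider_payoff pI qI (b / (a + b)) g.
Proof.
  intros ha hb; unfold J_I, insider_payoff.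
  apply (long_run_avg_one_sub_xsol_sq _ a b); [easy | easy | intro; ring].
Qed.

Definition best_response (c q y : R) : R := Rmin 1 (c / (q * y)).

Lemma best_response_spec (c q y : R) : 0 < c -> 0 < q -> 0 < y ->
  let x := best_response c q y in
  0 < x <= 1 /\ q * x * y <= c /\ (x = 1 \/ q * x * y = c).
Proof.
  intros hc hq hy x.
  assert (hqy : 0 < q * y) by nra.
  assert (hfrac : q * (c / (q * y)) * y = c) by (field; lra).
  assert (0 < c / (q * y)) by (apply Rdiv_lt_0_compat; lra).
  unfold x, best_response.
  destruct (Rle_dec 1 (c / (q * y))) as [hle | hgt].
  - rewrite Rmin_left by lra. nra.
  - rewrite Rmin_right by lra. lra.
Qed.

Lemma share_cost_min (c q y x' : R) : 0 < c -> 0 < q -> 0 < y -> 0 < x' <= 1 ->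
  share_cost c q (best_response c q y) y <= share_cost c q x' y.
Proof.
  intros hc hq hy hx'.
  destruct (best_response_spec c q y hc hq hy) as (hx & hcap & hcase).
  set (x := best_response c q y) in *.
  set (d := c - q * x * y).
  assert (hdiff : share_cost c q x' y - share_cost c q x y =
     y ^ 2 * (q * (x + y) * y * (x - x') ^ 2 + d * ((x + y) ^ 2 - (x' + y) ^ 2))
     / ((x + y) ^ 2 * (x' + y) ^ 2)).
  { unfold share_cost, d; field; lra. }
  assert (hnum : 0 <= q * (x + y) * y * (x - x') ^ 2 + d * ((x + y) ^ 2 - (x' + y) ^ 2)).
  { assert (0 <= q * (x + y) * y * (x - x') ^ 2) by (apply Rmult_le_pos; [nra | apply pow2_ge_0]).
    destruct hcase as [hx1 | hxc].
    - assert (0 <= (x + y) ^ 2 - (x' + y) ^ 2) by (rewrite hx1; nra).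
      assert (0 <= d) by (unfold d; lra).
      nra.
    - replace d with 0 by (unfold d; lra). lra. }
  assert (0 <= y ^ 2 * (q * (x + y) * y * (x - x') ^ 2 + d * ((x + y) ^ 2 - (x' + y) ^ 2))
               / ((x + y) ^ 2 * (x' + y) ^ 2)).
  { apply Rdiv_le_0_compat; [apply Rmult_le_pos; [apply pow2_ge_0 | exact hnum] |].
    apply Rmult_lt_0_compat; apply pow_lt; lra. }
  lra.
Qed.

Lemma insider_payoff_sub (pI qI y g : R) :
  insider_payoff pI qI y g - insider_payoff pI qI y 0 = g ^ 2 * (y ^ 2 - / 2) - qI * g.
Proof. unfold insider_payoff; ring. Qed.

Lemma insider_payoff_le_idle (pI qI y g : R) : 0 <= qI -> y ^ 2 - / 2 <= qI -> 0 <= g <= 1 ->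
  insider_payoff pI qI y g <= insider_payoff pI qI y 0.
Proof.
  intros hq hy hg.
  pose proof (insider_payoff_sub pI qI y g).
  assert (g ^ 2 * (y ^ 2 - / 2) <= g * qI); [| nra].
  assert (0 <= g * qI) by nra.
  destruct (Rle_dec 0 (y ^ 2 - / 2)).
  - assert (g ^ 2 <= g) by nra. nra.
  - assert (0 <= g ^ 2) by nra. nra.
Qed.

Lemma insider_payoff_le_active (pI qI y g : R) : 0 <= qI -> qI <= y ^ 2 - / 2 -> 0 <= g <= 1 ->
  insider_payoff pI qI y g <= insider_payoff pI qI y 1.
Proof.
  intros hq hy hg.
  pose proof (insider_payoff_sub pI qI y g).
  pose proof (insider_payoff_sub pI qI y 1).
  assert (0 <= (1 - g) * ((y ^ 2 - / 2) * (1 + g) - qI)) by (apply Rmult_le_pos; nra).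
  nra.
Qed.

Lemma sqrt_half_plus_bounds (qI : R) : 0 <= qI -> qI < / 2 ->
  / 2 < sqrt (/ 2 + qI) < 1.
Proof.
  intros hq hq2.
  pose proof (pow2_sqrt (/ 2 + qI)).
  pose proof (sqrt_pos (/ 2 + qI)).
  split; nra.
Qed.

Lemma eps_thr_pos_sq (rD qI : R) : 0 < rD -> 0 <= qI -> qI < / 2 ->
  0 < eps_thr rD qI /\
  eps_thr rD qI ^ 2 = rD * sqrt (/ 2 + qI) / (1 - sqrt (/ 2 + qI)).
Proof.
  intros hr hq hq2.
  pose proof (sqrt_half_plus_bounds qI hq hq2) as hs.
  set (s := sqrt (/ 2 + qI)) in *.
  set (u := / rD * (/ s - 1)).
  assert (hu : 0 < u).
  { apply Rmult_lt_0_compat; [apply Rinv_0_lt_compat; lra |].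
    assert (1 < / s) by (rewrite <- Rinv_1; apply Rinv_lt_contravar; lra). lra. }
  unfold eps_thr; fold s; fold u.
  split; [apply Rinv_0_lt_compat, sqrt_lt_R0; lra |].
  rewrite pow_inv, pow2_sqrt by lra.
  unfold u; field; lra.
Qed.

Lemma equal_ratio_share_sub_sqrt (rD qI b : R) : 0 < rD -> 0 <= qI -> qI < / 2 -> 0 < b ->
  b / (rD / b + b) - sqrt (/ 2 + qI)
  = (1 - sqrt (/ 2 + qI)) * (b ^ 2 - eps_thr rD qI ^ 2) / (rD + b ^ 2).
Proof.
  intros hr hq hq2 hb.
  pose proof (sqrt_half_plus_bounds qI hq hq2).
  rewrite (proj2 (eps_thr_pos_sq rD qI hr hq hq2)).
  field; repeat split; nra.
Qed.

Lemma equal_ratio_share_le_sqrt (rD qI b : R) : 0 < rD -> 0 <= qI -> qI < / 2 ->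
  0 < b <= eps_thr rD qI -> b / (rD / b + b) <= sqrt (/ 2 + qI).
Proof.
  intros hr hq hq2 hb.
  pose proof (equal_ratio_share_sub_sqrt rD qI b hr hq hq2 (proj1 hb)) as hsub.
  pose proof (sqrt_half_plus_bounds qI hq hq2).
  assert (b ^ 2 <= eps_thr rD qI ^ 2) by (apply pow_incr; lra).
  assert (0 < / (rD + b ^ 2)) by (apply Rinv_0_lt_compat; nra).
  assert ((1 - sqrt (/ 2 + qI)) * (b ^ 2 - eps_thr rD qI ^ 2) <= 0) by nra.
  unfold Rdiv in hsub; nra.
Qed.

Lemma sqrt_le_equal_ratio_share (rD qI b : R) : 0 < rD -> 0 <= qI -> qI < / 2 ->
  eps_thr rD qI <= b -> sqrt (/ 2 + qI) <= b / (rD / b + b).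
Proof.
  intros hr hq hq2 hb.
  pose proof (eps_thr_pos_sq rD qI hr hq hq2) as [he _].
  pose proof (equal_ratio_share_sub_sqrt rD qI b hr hq hq2 ltac:(lra)) as hsub.
  pose proof (sqrt_half_plus_bounds qI hq hq2).
  assert (eps_thr rD qI ^ 2 <= b ^ 2) by (apply pow_incr; lra).
  assert (0 < / (rD + b ^ 2)) by (apply Rinv_0_lt_compat; nra).
  assert (0 <= (1 - sqrt (/ 2 + qI)) * (b ^ 2 - eps_thr rD qI ^ 2)) by nra.
  unfold Rdiv in hsub; nra.
Qed.

Lemma equal_ratio_insider_idle (rD qI b : R) : 0 < rD -> 0 <= qI -> qI < / 2 ->
  0 < b <= eps_thr rD qI -> (b / (rD / b + b)) ^ 2 - / 2 <= qI.
Proof.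
  intros hr hq hq2 hb.
  pose proof (equal_ratio_share_le_sqrt rD qI b hr hq hq2 hb).
  pose proof (pow2_sqrt (/ 2 + qI)).
  assert (0 < rD / b) by (apply Rdiv_lt_0_compat; lra).
  assert (0 <= b / (rD / b + b)) by (apply Rdiv_le_0_compat; lra).
  assert ((b / (rD / b + b)) ^ 2 <= sqrt (/ 2 + qI) ^ 2) by (apply pow_incr; lra).
  lra.
Qed.

Lemma equal_ratio_insider_active (rD qI b : R) : 0 < rD -> 0 <= qI -> qI < / 2 ->
  eps_thr rD qI <= b -> qI <= (b / (rD / b + b)) ^ 2 - / 2.
Proof.
  intros hr hq hq2 hb.
  pose proof (sqrt_le_equal_ratio_share rD qI b hr hq hq2 hb).
  pose proof (pow2_sqrt (/ 2 + qI)).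
  pose proof (sqrt_pos (/ 2 + qI)).
  assert (sqrt (/ 2 + qI) ^ 2 <= (b / (rD / b + b)) ^ 2) by (apply pow_incr; lra).
  lra.
Qed.

Lemma equal_ratio_share_le (rD b : R) : 0 < rD -> 0 < b <= 1 ->
  b / (rD / b + b) <= / (rD + 1).
Proof.
  intros hr hb.
  replace (b / (rD / b + b)) with (b ^ 2 / (rD + b ^ 2)) by (field; split; nra).
  apply (Rmult_le_reg_r ((rD + b ^ 2) * (rD + 1))); [nra |].
  replace (b ^ 2 / (rD + b ^ 2) * ((rD + b ^ 2) * (rD + 1))) with (b ^ 2 * (rD + 1)) by (field; nra).
  replace (/ (rD + 1) * ((rD + b ^ 2) * (rD + 1))) with (rD + b ^ 2) by (field; lra).
  assert (b ^ 2 <= 1) by nra.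
  nra.
Qed.

Lemma inv_succ_sq_lt_1 (r : R) : 0 < r -> (/ (r + 1)) ^ 2 < 1.
Proof.
  intro hr.
  assert (0 < / (r + 1) < 1).
  { split; [apply Rinv_0_lt_compat; lra |].
    rewrite <- Rinv_1; apply Rinv_lt_contravar; lra. }
  nra.
Qed.

Lemma eps_thr_le_1 (rD qI : R) : 0 < rD -> 0 <= qI -> qI <= (/ (rD + 1)) ^ 2 - / 2 ->
  eps_thr rD qI <= 1.
Proof.
  intros hr hq hqI.
  assert (hq2 : qI < / 2) by (pose proof (inv_succ_sq_lt_1 rD hr); lra).
  pose proof (eps_thr_pos_sq rD qI hr hq hq2) as [he _].
  pose proof (equal_ratio_share_sub_sqrt rD qI 1 hr hq hq2 Rlt_0_1) as hsub.
  replace (1 / (rD / 1 + 1)) with (/ (rD + 1)) in hsub by (field; lra).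
  rewrite pow1 in hsub.
  pose proof (pow2_sqrt (/ 2 + qI)).
  pose proof (sqrt_half_plus_bounds qI hq hq2).
  assert (0 < / (rD + 1)) by (apply Rinv_0_lt_compat; lra).
  assert (sqrt (/ 2 + qI) <= / (rD + 1)) by nra.
  unfold Rdiv in hsub.
  assert (0 <= (1 - sqrt (/ 2 + qI)) * (1 - eps_thr rD qI ^ 2)) by nra.
  assert (0 <= 1 - eps_thr rD qI ^ 2) by nra.
  nra.
Qed.

Lemma le_eps_thr (rD qI : R) : 0 < rD <= 1 -> 0 <= qI -> qI < / 2 -> rD <= eps_thr rD qI.
Proof.
  intros hr hq hq2.
  pose proof (eps_thr_pos_sq rD qI ltac:(lra) hq hq2) as [he he2].
  pose proof (sqrt_half_plus_bounds qI hq hq2).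
  assert (rD <= eps_thr rD qI ^ 2).
  { rewrite he2. apply (Rmult_le_reg_r (1 - sqrt (/ 2 + qI))); [lra |].
    unfold Rdiv; rewrite Rmult_assoc, Rinv_l, Rmult_1_r by lra. nra. }
  nra.
Qed.

Section Games.

Variables pA pD pI qA qD qI : R.
Hypotheses (HpA : 0 < pA) (HpD : 0 < pD) (HqA : 0 < qA) (HqD : 0 < qD) (HqI : 0 <= qI).

Local Notation rA := (pA / qA).
Local Notation rD := (pD / qD).
(* [gA g] is the insider strategy entering the attacker's cost: the actual one in Game C,
   where the attacker knows of the insider, and 0 in Game D. *)
Local Notation game gA :=
  (NashEq (fun a b g => J_A pA qA a b (gA g)) (fun a b _ => J_D pD qD a b 0)
          (fun a b g => J_I pI qI a b g)).

Lemma attacker_weight_pos (x : R) : 0 < pA * (1 - x) ^ 2 + x ^ 2.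
Proof.
  destruct (Req_dec x 0) as [-> | hx]; [nra |].
  pose proof (Rsqr_pos_lt x hx); unfold Rsqr in *.
  assert (0 <= pA * (1 - x) ^ 2) by (apply Rmult_le_pos; [lra | apply pow2_ge_0]).
  nra.
Qed.

Lemma NE_of_best_responses (gA : R -> R) (w a b g : R) :
  w = pA * (1 - gA g) ^ 2 + gA g ^ 2 -> 0 < b -> 0 <= g <= 1 ->
  a = best_response w qA b -> b = best_response pD qD a ->
  (forall g', 0 <= g' <= 1 ->
     insider_payoff pI qI (b / (a + b)) g' <= insider_payoff pI qI (b / (a + b)) g) ->
  game gA a b g.
Proof.
  intros hw hb hg ha hbr hI.
  pose proof (attacker_weight_pos (gA g)) as hw0; rewrite <- hw in hw0.
  pose proof (best_response_spec w qA b hw0 HqA hb) as [hap _]; rewrite <- ha in hap.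
  pose proof (best_response_spec pD qD a HpD HqD (proj1 hap)) as [hbp _]; rewrite <- hbr in hbp.
  repeat split; try lra.
  - intros a' ha'; rewrite !J_A_eq, <- hw, ha by lra.
    apply share_cost_min; lra.
  - intros b' hb'; rewrite !J_D_eq by lra.
    replace (pD * (1 - 0) ^ 2 + 0 ^ 2) with pD by ring.
    rewrite hbr; apply share_cost_min; lra.
  - intros g' hg'; rewrite !J_I_eq by lra; auto.
Qed.

Lemma NE_idle (gA : R -> R) (a b : R) : gA 0 = 0 -> 0 < b ->
  a = best_response pA qA b -> b = best_response pD qD a ->
  (b / (a + b)) ^ 2 - / 2 <= qI -> game gA a b 0.
Proof.
  intros hg0 hb ha hbr hI.
  apply (NE_of_best_responses gA pA); try lra; auto.
  - rewrite hg0; ring.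
  - intros; apply insider_payoff_le_idle; auto.
Qed.

Lemma NE_active (gA : R -> R) (w a b : R) : w = pA * (1 - gA 1) ^ 2 + gA 1 ^ 2 -> 0 < b ->
  a = best_response w qA b -> b = best_response pD qD a ->
  qI <= (b / (a + b)) ^ 2 - / 2 -> game gA a b 1.
Proof.
  intros hw hb ha hbr hI.
  apply (NE_of_best_responses gA w); try lra; auto.
  intros; apply insider_payoff_le_active; auto.
Qed.

Lemma best_responses_equal_ratios (w b : R) : w / qA = rD -> rD <= b <= 1 ->
  rD / b = best_response w qA b /\ b = best_response pD qD (rD / b).
Proof.
  intros hr hb.
  assert (0 < rD) by (apply Rdiv_lt_0_compat; lra).
  unfold best_response; split.
  - replace (w / (qA * b)) with (rD / b) by (rewrite <- hr; field; lra).
    rewrite Rmin_right; [reflexivity | apply (Rdiv_le_1 rD b); lra].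
  - replace (pD / (qD * (rD / b))) with b by (field; lra).
    rewrite Rmin_right; lra.
Qed.

Lemma best_responses_attacker_interior (w : R) : 0 < w -> w / qA <= 1 -> w / qA < rD ->
  w / qA = best_response w qA 1 /\ 1 = best_response pD qD (w / qA).
Proof.
  intros hw hr hrD.
  assert (0 < w / qA) by (apply Rdiv_lt_0_compat; lra).
  unfold best_response; split.
  - rewrite Rmult_1_r, Rmin_right; lra.
  - replace (pD / (qD * (w / qA))) with (rD / (w / qA)) by (field; lra).
    rewrite Rmin_left; [reflexivity |].
    apply Rle_div_r; lra.
Qed.

Lemma best_responses_defender_interior (w : R) : rD <= 1 -> rD < w / qA ->
  1 = best_response w qA rD /\ rD = best_response pD qD 1.
Proof.
  intros hrD hr.
  assert (0 < rD) by (apply Rdiv_lt_0_compat; lra).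
  unfold best_response; split.
  - replace (w / (qA * rD)) with (w / qA / rD) by (field; lra).
    rewrite Rmin_left; [reflexivity |].
    apply Rle_div_r; lra.
  - rewrite Rmult_1_r, Rmin_right; lra.
Qed.

Lemma best_responses_corner (w : R) : 1 < w / qA -> 1 < rD ->
  1 = best_response w qA 1 /\ 1 = best_response pD qD 1.
Proof.
  intros hr hrD.
  unfold best_response; rewrite !Rmult_1_r, !Rmin_left; lra.
Qed.

Lemma NE_idle_equal_ratios (gA : R -> R) (b : R) : gA 0 = 0 -> rA = rD -> rD <= b <= 1 ->
  (b / (rD / b + b)) ^ 2 - / 2 <= qI -> game gA (rD / b) b 0.
Proof.
  intros hg0 hr hb hI.
  assert (0 < rD) by (apply Rdiv_lt_0_compat; lra).
  destruct (best_responses_equal_ratios pA b hr hb) as [ha hbr].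
  apply NE_idle; auto; lra.
Qed.

Lemma NE_idle_equal_ratios_costly (gA : R -> R) : gA 0 = 0 -> rA = rD -> rD <= 1 ->
  qI > (/ (rA + 1)) ^ 2 - / 2 -> forall b, rD <= b <= 1 -> game gA (rD / b) b 0.
Proof.
  intros hg0 hr hrD hq b hb.
  assert (0 < rD) by (apply Rdiv_lt_0_compat; lra).
  apply NE_idle_equal_ratios; auto.
  rewrite hr in hq.
  pose proof (equal_ratio_share_le rD b ltac:(lra) ltac:(lra)).
  assert (0 < rD / b) by (apply Rdiv_lt_0_compat; lra).
  assert (0 <= b / (rD / b + b)) by (apply Rdiv_le_0_compat; lra).
  assert ((b / (rD / b + b)) ^ 2 <= (/ (rD + 1)) ^ 2) by (apply pow_incr; lra).
  lra.
Qed.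

Lemma NE_idle_equal_ratios_below_eps (gA : R -> R) : gA 0 = 0 -> rA = rD -> rD <= 1 ->
  qI <= (/ (rA + 1)) ^ 2 - / 2 -> forall b, rD <= b <= eps_thr rD qI -> game gA (rD / b) b 0.
Proof.
  intros hg0 hr hrD hq b hb.
  assert (0 < rD) by (apply Rdiv_lt_0_compat; lra).
  rewrite hr in hq.
  pose proof (eps_thr_le_1 rD qI ltac:(lra) HqI hq).
  apply NE_idle_equal_ratios; auto; [lra |].
  apply equal_ratio_insider_idle; try lra.
  pose proof (inv_succ_sq_lt_1 rD ltac:(lra)); lra.
Qed.

Lemma NE_idle_attacker_interior (gA : R -> R) : gA 0 = 0 -> rA <= 1 -> rA < rD ->
  qI >= (/ (rA + 1)) ^ 2 - / 2 -> game gA rA 1 0.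
Proof.
  intros hg0 hr hrD hq.
  destruct (best_responses_attacker_interior pA HpA hr hrD) as [ha hbr].
  assert (0 < rA) by (apply Rdiv_lt_0_compat; lra).
  apply NE_idle; auto; [lra |].
  replace (1 / (rA + 1)) with (/ (rA + 1)) by (field; lra).
  lra.
Qed.

Lemma NE_idle_defender_interior (gA : R -> R) : gA 0 = 0 -> rD <= 1 -> rD < rA ->
  game gA 1 rD 0.
Proof.
  intros hg0 hrD hr.
  destruct (best_responses_defender_interior pA hrD hr) as [ha hbr].
  assert (0 < rD) by (apply Rdiv_lt_0_compat; lra).
  apply NE_idle; auto.
  assert (0 <= rD / (1 + rD) <= / 2).
  { split; [apply Rdiv_le_0_compat; lra |].
    apply Rle_div_l; lra. }
  nra.
Qed.

Lemma NE_idle_corner (gA : R -> R) : gA 0 = 0 -> rA > 1 -> rD > 1 -> game gA 1 1 0.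
Proof.
  intros hg0 hr hrD.
  destruct (best_responses_corner pA hr hrD) as [ha hbr].
  apply NE_idle; auto; [lra |].
  replace (1 / (1 + 1)) with (/ 2) by field.
  lra.
Qed.

Lemma NE_active_equal_ratios (gA : R -> R) (w r : R) :
  w = pA * (1 - gA 1) ^ 2 + gA 1 ^ 2 -> r = w / qA -> r = rD -> rD <= 1 ->
  qI <= (/ (r + 1)) ^ 2 - / 2 -> forall b, eps_thr rD qI <= b <= 1 -> game gA (rD / b) b 1.
Proof.
  intros hw hwr hr hrD hq b hb.
  assert (0 < rD) by (apply Rdiv_lt_0_compat; lra).
  rewrite hr in hq.
  assert (hq2 : qI < / 2) by (pose proof (inv_succ_sq_lt_1 rD ltac:(lra)); lra).
  pose proof (le_eps_thr rD qI ltac:(lra) HqI hq2).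
  assert (hrD0 : w / qA = rD) by congruence.
  destruct (best_responses_equal_ratios w b hrD0 ltac:(lra)) as [ha hbr].
  apply (NE_active gA w); auto; [lra |].
  apply equal_ratio_insider_active; lra.
Qed.

Lemma NE_active_attacker_interior (gA : R -> R) (w r : R) :
  w = pA * (1 - gA 1) ^ 2 + gA 1 ^ 2 -> r = w / qA -> r <= 1 -> r < rD ->
  qI <= (/ (r + 1)) ^ 2 - / 2 -> game gA r 1 1.
Proof.
  intros hw hwr hr hrD hq.
  pose proof (attacker_weight_pos (gA 1)) as hw0; rewrite <- hw in hw0.
  subst r.
  destruct (best_responses_attacker_interior w hw0 hr hrD) as [ha hbr].
  assert (0 < w / qA) by (apply Rdiv_lt_0_compat; lra).
  apply (NE_active gA w); auto; [lra |].
  replace (1 / (w / qA + 1)) with (/ (w / qA + 1)) by (field; lra).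
  lra.
Qed.

End Games.

Theorem theorem2 (pA pD pI qA qD qI : R)
  (HpA : 0 < pA < 1) (HpD : 0 < pD < 1) (HpI : 0 < pI < 1)
  (HqA : 0 < qA) (HqD : 0 < qD) (HqI : 0 <= qI) :
  let rA := pA / qA in
  let rD := pD / qD in
  let eps := eps_thr rD qI in
  let NEC := GameC_NE pA qA pD qD pI qI in
  let NED := GameD_NE pA qA pD qD pI qI in
  (* Game C *)
  ( (* (C1) *)
    (rA / pA = rD -> rD <= 1 -> qI <= (/ (rA / pA + 1)) ^ 2 - / 2 ->
       forall b, eps <= b <= 1 -> NEC (rD / b) b 1) /\
    (* (C2) *)
    (rA / pA <= 1 -> rA / pA < rD -> qI <= (/ (rA / pA + 1)) ^ 2 - / 2 ->
       NEC (rA / pA) 1 1) /\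
    (* (i) *)
    (rA = rD -> rD <= 1 -> qI > (/ (rA + 1)) ^ 2 - / 2 ->
       forall b, rD <= b <= 1 -> NEC (rD / b) b 0) /\
    (* (ii) *)
    (rA = rD -> rD <= 1 -> qI <= (/ (rA + 1)) ^ 2 - / 2 ->
       forall b, rD <= b <= eps -> NEC (rD / b) b 0) /\
    (* (iii) *)
    (rA <= 1 -> rA < rD -> qI >= (/ (rA + 1)) ^ 2 - / 2 -> NEC rA 1 0) /\
    (* (iv) *)
    (rD <= 1 -> rD < rA -> NEC 1 rD 0) /\
    (* (v) *)
    (rA > 1 -> rD > 1 -> NEC 1 1 0) ) /\
  (* Game D *)
  ( (* (D1) *)
    (rA = rD -> rD <= 1 -> qI <= (/ (rA + 1)) ^ 2 - / 2 ->
       forall b, eps <= b <= 1 -> NED (rD / b) b 1) /\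
    (* (D2) *)
    (rA <= 1 -> rA < rD -> qI <= (/ (rA + 1)) ^ 2 - / 2 -> NED rA 1 1) /\
    (* (i) *)
    (rA = rD -> rD <= 1 -> qI > (/ (rA + 1)) ^ 2 - / 2 ->
       forall b, rD <= b <= 1 -> NED (rD / b) b 0) /\
    (* (ii) *)
    (rA = rD -> rD <= 1 -> qI <= (/ (rA + 1)) ^ 2 - / 2 ->
       forall b, rD <= b <= eps -> NED (rD / b) b 0) /\
    (* (iii) *)
    (rA <= 1 -> rA < rD -> qI >= (/ (rA + 1)) ^ 2 - / 2 -> NED rA 1 0) /\
    (* (iv) *)
    (rD <= 1 -> rD < rA -> NED 1 rD 0) /\
    (* (v) *)
    (rA > 1 -> rD > 1 -> NED 1 1 0) ).
Proof.
  intros rA rD eps NEC NED.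
  destruct HpA as [HpA0 _], HpD as [HpD0 _].
  assert (hC : rA / pA = 1 / qA) by (unfold rA; field; lra).
  repeat match goal with |- _ /\ _ => split end.
  - apply NE_active_equal_ratios with (gA := fun g => g) (w := 1); auto; ring.
  - apply NE_active_attacker_interior with (gA := fun g => g) (w := 1); auto; ring.
  - now apply NE_idle_equal_ratios_costly.
  - now apply NE_idle_equal_ratios_below_eps.
  - now apply NE_idle_attacker_interior.
  - now apply NE_idle_defender_interior.
  - now apply NE_idle_corner.
  - apply NE_active_equal_ratios with (gA := fun _ => 0) (w := pA); auto; ring.
  - apply NE_active_attacker_interior with (gA := fun _ => 0) (w := pA); auto; ring.
  - now apply NE_idle_equal_ratios_costly.
  - now apply NE_idle_equal_ratios_below_eps.
  - now apply NE_idle_attacker_interior.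
  - now apply NE_idle_defender_interior.
  - now apply NE_idle_corner.
Qed.
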